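(* Let $\mathbb{K}$ be a field of characteristic $0$, let $m\geq 2$ and $d\geq 2$ be integers, let $M_1,\ldots,M_{\tau_m}$, $\tau_m=\binom{m+d-2}{d-1}$, be all the monomials of degree $d-1$ in $u_1,\ldots,u_m$, let $f=\sum_{j=1}^{\tau_m}x_jM_j$, and let $A=Q/\operatorname{Ann}_Q(f)$ be the associated full Perazzo algebra, where $Q=\mathbb{K}[X_1,\ldots,X_{\tau_m},U_1,\ldots,U_m]$ acts by differentiation. Then for $k=1,\ldots,\lfloor d/2\rfloor$, \[\dim_{\mathbb{K}} A_k=\binom{m+k-1}{k}+\binom{m+d-k-1}{d-k}.\] Moreover, for fixed $d$ there is $m_0$ such that for all $m\geq m_0$ the Hilbert function of $A$ is totally non-unimodal, i.e. $h_1>h_2>\cdots>h_{\lfloor d/2\rfloor}$ where $h_i=\dim A_i$.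
   Context: $A$ is a standard graded Artinian Gorenstein algebra of socle degree $d$ and codimension $m+\tau_m$. *)

From HB Require Import structures.
From mathcomp Require Import all_boot all_order all_algebra.
From mathcomp Require Import mpoly.
Set Implicit Arguments. Unset Strict Implicit. Unset Printing Implicit Defensive.
Import Order.TTheory GRing.Theory Num.Theory.
Local Open Scope ring_scope.

Section Perazzo.
Variable K : fieldType.

Definition mons (n k : nat) : seq 'X_{1..n} :=
  [seq val mu | mu <- enum [pred mu : 'X_{1..n < k.+1} | mdeg (val mu) == k]].

Definition tau (m d : nat) : nat := size (mons m d.-1).

(* Number of variables of Q = K[X_1..X_tau, U_1..U_m] (and of R = K[x,u]):
   indices 0..tau-1 are the X_j (x_j), indices tau..tau+m-1 the U_i (u_i). *)
Definition nvars (m d : nat) : nat := tau m d + m.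

Definition liftu (m d : nat) (mu : 'X_{1..m}) : 'X_{1..nvars m d} :=
  [multinom (match split i with inl _ => 0%N | inr j => mu j end)
   | i < nvars m d].

Definition xvar (m d : nat) (j : 'I_(tau m d)) : 'I_(nvars m d) := lshift m j.

Definition perazzo_f (m d : nat) : {mpoly K[nvars m d]} :=
  \sum_(j < tau m d) 'X_(xvar j) * 'X_[liftu d (nth 0%MM (mons m d.-1) j)].

Definition contract (n : nat) (alpha F : {mpoly K[n]}) : {mpoly K[n]} :=
  \sum_(mu <- msupp alpha) alpha@_mu *: mderivm mu F.

Definition Ann (n : nat) (F : {mpoly K[n]}) : pred {mpoly K[n]} :=
  [pred alpha | contract alpha F == 0].

Definition dimQ (n k : nat) : nat := size (mons n k).

Definition Qform (n k : nat) (c : 'rV[K]_(dimQ n k)) : {mpoly K[n]} :=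
  \sum_(i < dimQ n k) c 0 i *: 'X_[nth 0%MM (mons n k) i].

(* Matrix of the linear map Q_k -> R, alpha |-> alpha o F, written in the
   monomial bases (target: all monomials of degree <= b; for F of degree
   <= b this captures alpha o F entirely). *)
Definition actmx (n k b : nat) (F : {mpoly K[n]}) :
  'M[K]_(dimQ n k, #|{: 'X_{1..n < b.+1}}|) :=
  \matrix_(i < dimQ n k, j < #|{: 'X_{1..n < b.+1}}|)
     (contract 'X_[nth 0%MM (mons n k) i] F)@_(val (enum_val j)).

(* (Ann_Q F)_k as a subspace of Q_k (row space of kermx), so that
   c is in it iff Qform c \in Ann F  (for F of degree <= b). *)
Definition Ann_k (n k b : nat) (F : {mpoly K[n]}) := kermx (actmx k b F).

Definition dimA (m d k : nat) : nat :=
  (dimQ (nvars m d) k - \rank (Ann_k k d (perazzo_f m d)))%N.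

End Perazzo.

(* In the monomial bases, the matrix of alpha |-> alpha o f on Q_k has a nonzero
   entry at (x^chi u^mu, x^chi' u^mu') exactly when chi + chi' = x_j and
   mu + mu' = M_j for some j: the entry is a falling factorial times a
   coefficient of f, and char K = 0.  For 1 <= k < d, the rows with chi = 0 are
   the u-monomials of degree k, and a row with chi <> 0 can only meet columns
   that are u-monomials of degree d - k; hence rank <= C(m+k-1,k) + C(m+d-k-1,d-k).
   A diagonal minor of that size gives equality, and dim A_k is that rank.
   Total non-unimodality is then a binomial inequality: by Pascal's rule and
   monotonicity of C(n+t,t) in t, h_{i+1} < h_i as soon as m >= d + 3. *)

From HB Require Import structures.
From mathcomp Require Import all_boot all_order all_algebra.
From mathcomp Require Import mpoly.
From mathcomp Require Import zify.
Import Order.TTheory GRing.Theory Num.Theory.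
Set Implicit Arguments. Unset Strict Implicit. Unset Printing Implicit Defensive.

Lemma mem_mons n k (mu : 'X_{1..n}) : (mu \in mons n k) = (mdeg mu == k).
Proof.
apply/mapP/idP => [[b]|/eqP mu_k].
  by rewrite mem_enum inE => /eqP b_k ->; rewrite b_k.
have mu_lt : mdeg mu < k.+1 by rewrite mu_k.
by exists (Sub mu mu_lt : 'X_{1..n < k.+1}); rewrite // mem_enum inE /= mu_k.
Qed.

Lemma uniq_mons n k : uniq (mons n k).
Proof. by rewrite map_inj_uniq ?enum_uniq //; apply: val_inj. Qed.

Lemma size_mons n k : size (mons n.+1 k) = 'C(k + n, k).
Proof.
rewrite -(size_basis n k); apply/perm_size/uniq_perm.
- exact: uniq_mons.
- exact: uniq_basis.
- by move=> mu; rewrite mem_mons basis_cover.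
Qed.

Lemma mdeg_nth_mons n k (i : 'I_(size (mons n k))) : mdeg (nth 0%MM (mons n k) i) = k.
Proof. by apply/eqP; rewrite -mem_mons mem_nth. Qed.

Lemma nth_mons_inj n k : injective (fun i : 'I_(size (mons n k)) => nth 0%MM (mons n k) i).
Proof. by move=> i j /eqP; rewrite nth_uniq ?uniq_mons // => /eqP/ord_inj. Qed.

Lemma nth_mons_onto n k (mu : 'X_{1..n}) : mdeg mu = k ->
  exists i : 'I_(size (mons n k)), nth 0%MM (mons n k) i = mu.
Proof.
by move=> /eqP; rewrite -mem_mons => /(nthP 0%MM) [i lt_i_s <-]; exists (Ordinal lt_i_s).
Qed.

Section MonomialConcatenation.
Variables p q : nat.
Implicit Types (chi : 'X_{1..p}) (mu : 'X_{1..q}) (nu : 'X_{1..p + q}).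

Definition mnm_cat chi mu : 'X_{1..p + q} :=
  [multinom match split i with inl a => chi a | inr b => mu b end | i < p + q].
Definition mnm_lpart nu : 'X_{1..p} := [multinom nu (lshift q i) | i < p].
Definition mnm_rpart nu : 'X_{1..q} := [multinom nu (rshift p i) | i < q].

Lemma mnm_cat_lshift chi mu i : mnm_cat chi mu (lshift q i) = chi i.
Proof. by rewrite mnmE (unsplitK (inl i)). Qed.

Lemma mnm_cat_rshift chi mu i : mnm_cat chi mu (rshift p i) = mu i.
Proof. by rewrite mnmE (unsplitK (inr i)). Qed.

Lemma mnm_lpart_cat chi mu : mnm_lpart (mnm_cat chi mu) = chi.
Proof. by apply/mnmP => i; rewrite mnmE mnm_cat_lshift. Qed.

Lemma mnm_rpart_cat chi mu : mnm_rpart (mnm_cat chi mu) = mu.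
Proof. by apply/mnmP => i; rewrite mnmE mnm_cat_rshift. Qed.

Lemma mnm_cat_parts nu : mnm_cat (mnm_lpart nu) (mnm_rpart nu) = nu.
Proof.
apply/mnmP => i; rewrite -(splitK i); case: (split i) => j /=.
  by rewrite mnm_cat_lshift mnmE.
by rewrite mnm_cat_rshift mnmE.
Qed.

Lemma mnm_cat_inj chi mu chi' mu' :
  mnm_cat chi mu = mnm_cat chi' mu' -> chi = chi' /\ mu = mu'.
Proof.
move=> E; split.
  by rewrite -(mnm_lpart_cat chi mu) E mnm_lpart_cat.
by rewrite -(mnm_rpart_cat chi mu) E mnm_rpart_cat.
Qed.

Lemma mnm_catD chi mu chi' mu' :
  (mnm_cat chi mu + mnm_cat chi' mu' = mnm_cat (chi + chi') (mu + mu'))%MM.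
Proof.
apply/mnmP => i; rewrite mnmDE !mnmE.
by case: (split i) => j; rewrite mnmDE.
Qed.

Lemma mdeg_mnm_cat chi mu : mdeg (mnm_cat chi mu) = mdeg chi + mdeg mu.
Proof.
rewrite !mdegE big_split_ord /=; congr (_ + _); apply: eq_bigr => i _.
  by rewrite mnm_cat_lshift.
by rewrite mnm_cat_rshift.
Qed.

Lemma mdeg_mnm_parts nu : mdeg nu = mdeg (mnm_lpart nu) + mdeg (mnm_rpart nu).
Proof. by rewrite -mdeg_mnm_cat mnm_cat_parts. Qed.

Lemma mnm_cat_U i : mnm_cat U_(i)%MM 0%MM = U_(lshift q i)%MM.
Proof.
apply/mnmP => j; rewrite -(splitK j); case: (split j) => j' /=.
  by rewrite mnm_cat_lshift !mnm1E (inj_eq (@lshift_inj _ _)).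
rewrite mnm_cat_rshift mnm0E mnm1E eq_sym; case: eqP => // /(congr1 val) /= E.
by have := ltn_ord i; rewrite -E ltnNge leq_addr.
Qed.

End MonomialConcatenation.

Section PerazzoMatrix.
Variable K : fieldType.
Hypothesis charK0 : [pchar K]%R =i pred0.
Variables m d : nat.

Local Notation T := (tau m d).
Local Notation n := (nvars m d).

Definition perazzo_mon (j : 'I_T) : 'X_{1..m} := nth 0%MM (mons m d.-1) j.
Definition perazzo_term (j : 'I_T) : 'X_{1..n} := mnm_cat U_(j)%MM (perazzo_mon j).

Lemma mdeg_perazzo_mon j : mdeg (perazzo_mon j) = d.-1.
Proof. exact: mdeg_nth_mons. Qed.

Lemma liftuE (mu : 'X_{1..m}) : liftu d mu = mnm_cat 0%MM mu.
Proof. by apply/mnmP => i; rewrite !mnmE; case: split => //= j; rewrite mnm0E. Qed.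

Lemma mcoeff_perazzo_f mu :
  ((perazzo_f K m d)@_mu = (\sum_(j < T) (mu == perazzo_term j))%:R)%R.
Proof.
rewrite /perazzo_f raddf_sum natr_sum /=; apply: eq_bigr => j _.
by rewrite -mpolyXD mcoeffX liftuE /xvar -mnm_cat_U mnm_catD addm0 add0m eq_sym.
Qed.

Lemma eq_perazzo_term (nu nu' : 'X_{1..n}) j :
  (nu + nu' == perazzo_term j)%MM =
  (mnm_lpart nu + mnm_lpart nu' == U_(j))%MM &&
  (mnm_rpart nu + mnm_rpart nu' == perazzo_mon j)%MM.
Proof.
rewrite -{1}[nu]mnm_cat_parts -{1}[nu']mnm_cat_parts mnm_catD.
by apply/eqP/andP => [/mnm_cat_inj[-> ->]|[/eqP-> /eqP->]].
Qed.

(* The entry is a falling-factorial multiple of a coefficient of f, hence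
   nonzero in characteristic 0 exactly when that coefficient is. *)
Lemma actmx_perazzo_neq0 k i j :
  (actmx k d (perazzo_f K m d) i j != 0)%R =
  [exists jj : 'I_T,
     (mnm_lpart (nth 0%MM (mons n k) i) + mnm_lpart (val (enum_val j)) == U_(jj))%MM &&
     (mnm_rpart (nth 0%MM (mons n k) i) + mnm_rpart (val (enum_val j)) == perazzo_mon jj)%MM].
Proof.
rewrite /actmx mxE /contract msuppX big_seq1 mcoeffX eqxx scale1r.
rewrite mcoeff_mderivm mcoeff_perazzo_f -mulrnA ((pcharf0P K).1 charK0).
set P := (\prod_(_ < _) _)%N.
have P_gt0 : 0 < P by apply: prodn_gt0 => l; rewrite ffact_gt0 mnmDE leq_addr.
rewrite muln_eq0 negb_or -[P != 0]lt0n P_gt0 andbT sum_nat_eq0 negb_forall.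
by apply: eq_existsb => jj; rewrite /= eqb0 negbK eq_perazzo_term.
Qed.

End PerazzoMatrix.

Lemma card_leq_size_inj (I : finType) (U : eqType) (S : {pred I}) (f : I -> U)
    (s : seq U) :
  {in S &, injective f} -> {in S, forall i, f i \in s} -> #|S| <= size s.
Proof.
move=> f_inj f_s; rewrite cardE -(size_map f); apply: uniq_leq_size.
  by rewrite map_inj_in_uniq ?enum_uniq // => i j; rewrite !mem_enum; apply: f_inj.
by move=> u /mapP [i]; rewrite mem_enum => Si ->; apply: f_s.
Qed.

Lemma mxrank_leq_support_rows (F : fieldType) p q (B : 'M[F]_(p, q)) (S : {pred 'I_p}) :
  (forall i j, i \notin S -> B i j = 0%R) -> \rank B <= #|S|.
Proof.
move=> B_S.
have B_sub : (B <= \sum_(i in S) <<row i B>>)%MS.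
  apply/row_subP => i; have [Si|nSi] := boolP (i \in S).
    by apply: (sumsmx_sup i) => //; rewrite genmxE.
  suff -> : row i B = 0%R by apply: sub0mx.
  by apply/rowP => j; rewrite !mxE B_S.
apply: leq_trans (mxrankS B_sub) _; apply: leq_trans (mxrank_sum_leqif _).1 _.
by rewrite /= -sum1_card; apply: leq_sum => i _; rewrite genmxE rank_leq_row.
Qed.

Lemma mxrank_geq_diag_pattern (F : fieldType) p q (A : 'M[F]_(p, q)) (I : finType)
    (f : I -> 'I_p) (g : I -> 'I_q) :
  (forall s t, (A (f s) (g t) != 0%R) = (s == t)) -> #|I| <= \rank A.
Proof.
move=> A_diag; pose e := @enum_val I predT.
pose B := rowsub (f \o e) (colsub (g \o e) A).
have B_diag : B = diag_mx (\row_s A (f (e s)) (g (e s))).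
  apply/matrixP => s t; rewrite !mxE.
  have [->|neq_st] := eqVneq s t; first by rewrite mulr1n.
  apply/eqP; rewrite mulr0n -[_ == _]negbK A_diag.
  by rewrite (inj_eq enum_val_inj) neq_st.
have rank_B : \rank B = #|I|.
  apply: mxrank_unit; rewrite B_diag unitmxE det_diag unitfE.
  by apply/prodf_neq0 => s _; rewrite mxE A_diag.
rewrite -rank_B /B rowsubE; apply: leq_trans (mxrankM_maxr _ _) _.
have -> : colsub (g \o e) A = (A *m colsub (g \o e) 1%:M)%R.
  by rewrite mulmx_colsub mulmx1.
exact: mxrankM_maxl.
Qed.

Section PerazzoRank.
Variable K : fieldType.
Hypothesis charK0 : [pchar K]%R =i pred0.
Variables m d k : nat.

Local Notation T := (tau m d).
Local Notation n := (nvars m d).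
Local Notation A := (actmx k d (perazzo_f K m d)).
Local Notation a i := (nth 0%MM (mons n k) i).
Local Notation c j := (val (@enum_val {: 'X_{1..n < d.+1}} _ j)).

Lemma actmx_perazzo_col_support i j :
  (A i j != 0)%R -> mnm_lpart (a i) != 0%MM ->
  (mnm_lpart (c j) == 0%MM) && (mdeg (c j) == d - k).
Proof.
rewrite actmx_perazzo_neq0 // => /existsP [jj /andP [/eqP x_eq /eqP u_eq]].
move: (mdeg_nth_mons i) (congr1 mdeg x_eq) (congr1 mdeg u_eq) => {x_eq u_eq}.
rewrite !mdegD mdeg1 mdeg_perazzo_mon (mdeg_mnm_parts (a i)) (mdeg_mnm_parts (c j)).
(* [set] identifies convertible copies of these degrees, which lia would
   otherwise treat as distinct atoms. *)
rewrite -!mdeg_eq0; set xa := mdeg (mnm_lpart (a i)); set ua := mdeg (mnm_rpart (a i)).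
set xc := mdeg (mnm_lpart (c j)); set uc := mdeg (mnm_rpart (c j)).
by move=> *; apply/andP; split; apply/eqP; lia.
Qed.

Lemma rank_actmx_perazzo_leq : \rank A <= size (mons m k) + size (mons m (d - k)).
Proof.
pose S1 : {pred _} := [pred i : 'I_(dimQ n k) | mnm_lpart (a i) == 0%MM].
pose S2 : {pred _} := [pred j : 'I_#|{: 'X_{1..n < d.+1}}| |
  (mnm_lpart (c j) == 0%MM) && (mdeg (c j) == d - k)].
pose P := (\matrix_(i, j) if i \in S1 then A i j else 0)%R.
pose Q := (\matrix_(i, j) if i \in S1 then 0 else A i j)%R.
have rank_P : \rank P <= #|S1|.
  by apply: mxrank_leq_support_rows => i j /negbTE S1i; rewrite mxE S1i.
have rank_Q : \rank Q <= #|S2|.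
  rewrite -mxrank_tr; apply: mxrank_leq_support_rows => j i S2j.
  rewrite mxE [Q _ _]mxE; case: ifP => // /negbT S1i.
  by move: S2j; apply: contraNeq => Aij; rewrite inE (actmx_perazzo_col_support Aij).
have card_S1 : #|S1| <= size (mons m k).
  apply: (@card_leq_size_inj _ _ S1 (fun i => mnm_rpart (p := T) (a i))).
    move=> i i' /eqP x_i /eqP x_i' eq_u; apply: nth_mons_inj => /=.
    by rewrite -[a i]mnm_cat_parts -[a i']mnm_cat_parts x_i x_i' eq_u.
  move=> i /eqP x_i; have := mdeg_nth_mons i.
  by rewrite mem_mons (mdeg_mnm_parts (a i)) x_i mdeg0 add0n => ->.
have card_S2 : #|S2| <= size (mons m (d - k)).
  apply: (@card_leq_size_inj _ _ S2 (fun j => mnm_rpart (p := T) (c j))).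
    move=> j j' /andP [/eqP x_j _] /andP [/eqP x_j' _] eq_u.
    apply/enum_val_inj/val_inj => /=.
    by rewrite -[c j]mnm_cat_parts -[c j']mnm_cat_parts x_j x_j' eq_u.
  move=> j /andP [/eqP x_j /eqP deg_j].
  by rewrite mem_mons -deg_j (mdeg_mnm_parts (c j)) x_j mdeg0.
have -> : A = (P + Q)%R.
  by apply/matrixP => i j; rewrite !mxE; case: (i \in S1); rewrite ?addr0 ?add0r.
apply: leq_trans (mxrank_add _ _) _.
by apply: leq_add; apply: leq_trans; eassumption.
Qed.

Lemma exists_perazzo_mon j (mu : 'X_{1..m}) :
  [exists jj : 'I_T, (U_(j) == U_(jj))%MM && (mu == perazzo_mon jj)] =
  (mu == perazzo_mon j).
Proof.
apply/existsP/idP => [[jj /andP [/eqP/eqP]]|mu_j]; last by exists j; rewrite eqxx.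
by rewrite eq_mnm1 => /eqP ->.
Qed.

Hypotheses (m_gt0 : 0 < m) (k_gt0 : 0 < k) (k_lt_d : k < d).

(* The diagonal minor pairs u^al (deg al = k) with x_j u^al u_0^(d-1-k), and
   x_j u_0^(k-1) with u^ga (deg ga = d - k), where u_0 is a fixed u-variable. *)
Lemma rank_actmx_perazzo_geq : size (mons m k) + size (mons m (d - k)) <= \rank A.
Proof.
pose u0 : 'I_m := Ordinal m_gt0.
pose pw e : 'X_{1..m} := (U_(u0) *+ e)%MM.
have mdeg_pw e : mdeg (pw e) = e by rewrite mdegMn mdeg1 mul1n.
pose al := nth 0%MM (mons m k); pose ga := nth 0%MM (mons m (d - k)).
have /fin_all_exists [ja ja_mon] : forall s : 'I_(size (mons m k)),
    exists j : 'I_T, perazzo_mon j = (al s + pw (d.-1 - k)%N)%MM.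
  move=> s; apply: nth_mons_onto.
  by rewrite mdegD mdeg_pw mdeg_nth_mons; lia.
have /fin_all_exists [jb jb_mon] : forall s : 'I_(size (mons m (d - k))),
    exists j : 'I_T, perazzo_mon j = (pw k.-1 + ga s)%MM.
  move=> s; apply: nth_mons_onto.
  by rewrite mdegD mdeg_pw mdeg_nth_mons; lia.
pose I : finType := ('I_(size (mons m k)) + 'I_(size (mons m (d - k))))%type.
pose row (s : I) : 'X_{1..n} := match s with
  | inl s => mnm_cat 0%MM (al s) | inr s => mnm_cat U_(jb s)%MM (pw k.-1) end.
pose col (s : I) : 'X_{1..n} := match s with
  | inl s => mnm_cat U_(ja s)%MM (pw (d.-1 - k)%N) | inr s => mnm_cat 0%MM (ga s) end.
have /fin_all_exists [f f_row] : forall s, exists i : 'I_(dimQ n k), a i = row s.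
  move=> s; apply: nth_mons_onto.
  by case: s => s; rewrite mdeg_mnm_cat ?mdeg0 ?mdeg1 ?mdeg_pw ?mdeg_nth_mons; lia.
have /fin_all_exists [g g_col] :
    forall s, exists j : 'I_#|{: 'X_{1..n < d.+1}}|, c j = col s.
  move=> s.
  have col_lt : mdeg (col s) < d.+1.
    by case: s => s; rewrite mdeg_mnm_cat ?mdeg0 ?mdeg1 ?mdeg_pw ?mdeg_nth_mons; lia.
  by exists (enum_rank (Sub (col s) col_lt : 'X_{1..n < d.+1})); rewrite enum_rankK.
have -> : size (mons m k) + size (mons m (d - k)) = #|I| by rewrite card_sum !card_ord.
apply: (mxrank_geq_diag_pattern (f := f) (g := g)) => s t.
rewrite actmx_perazzo_neq0 // f_row g_col.
case: s => s; case: t => t; rewrite /= !mnm_lpart_cat !mnm_rpart_cat ?add0m ?addm0.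
- by rewrite exists_perazzo_mon ja_mon (inj_eq (@addIm _ _)) (inj_eq (@nth_mons_inj _ _)).
- by apply/existsP => -[jj /andP []]; rewrite eq_sym mnm1_eq0.
- by apply/existsP => -[jj /andP [/eqP /(congr1 mdeg)]]; rewrite mdegD !mdeg1.
- rewrite exists_perazzo_mon jb_mon (inj_eq (@addmI _ _)) (inj_eq (@nth_mons_inj _ _)).
  by rewrite eq_sym.
Qed.

End PerazzoRank.

Lemma dimA_perazzo (K : fieldType) (charK0 : [pchar K]%R =i pred0) m d k :
  0 < m -> 0 < k -> k < d ->
  dimA K m d k = 'C(m + k - 1, k) + 'C(m + d - k - 1, d - k).
Proof.
move=> m_gt0 k_gt0 k_lt_d.
rewrite /dimA /Ann_k mxrank_ker subKn ?rank_leq_row //.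
have -> : \rank (actmx k d (perazzo_f K m d)) = size (mons m k) + size (mons m (d - k)).
  by apply/eqP; rewrite eqn_leq rank_actmx_perazzo_leq ?rank_actmx_perazzo_geq.
by case: m m_gt0 => // m _; rewrite !size_mons; congr ('C(_, _) + 'C(_, _)); lia.
Qed.

Lemma leq_bin_shift n t s : 'C(n + t, t) <= 'C(n + t + s, t + s).
Proof.
elim: s => [|s IHs]; first by rewrite !addn0.
by rewrite !addnS binS; apply: leq_trans IHs (leq_addl _ _).
Qed.

Lemma leq_bin_succ n k : k < n - k -> 'C(n, k) <= 'C(n, k.+1).
Proof.
move=> lt_k; rewrite -(leq_pmul2l (ltn0Sn k)) mul_bin_left.
by rewrite leq_mul2r lt_k orbT.
Qed.

(* Pascal's rule on the last term reduces this to
   C(n+i+2, i+1) <= C(n+i+2, i+2) <= C(n+e+1, e+1). *)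
Lemma bin_sum_decreasing n i e : i < n -> i < e ->
  'C(n + i + 2, i + 1) + 'C(n + e + 1, e) <
  'C(n + i + 1, i) + 'C(n + e + 2, e + 1).
Proof.
move=> lt_in lt_ie.
have pascal : 'C(n + e + 2, e + 1) = 'C(n + e + 1, e + 1) + 'C(n + e + 1, e).
  by rewrite !addn1 -binS; congr 'C(_, _); lia.
have shift : 'C(n + i + 2, i + 2) <= 'C(n + e + 1, e + 1).
  have := leq_bin_shift n (i + 2) (e - i - 1).
  by rewrite (_ : n + (i + 2) + _ = n + e + 1) 1?(_ : i + 2 + _ = e + 1) ?addnA; lia.
have succ : 'C(n + i + 2, i + 1) <= 'C(n + i + 2, i + 2).
  by rewrite -addn1 (_ : i + 2 = (i + 1).+1) 1?leq_bin_succ; lia.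
have pos : 0 < 'C(n + i + 1, i) by rewrite bin_gt0; lia.
lia.
Qed.

Lemma perazzo_hilbert_decreasing m d i : d + 3 <= m -> i.*2 + 2 <= d ->
  'C(m + i.+1 - 1, i.+1) + 'C(m + d - i.+1 - 1, d - i.+1) <
  'C(m + i - 1, i) + 'C(m + d - i - 1, d - i).
Proof.
move=> le_dm le_id; have := @bin_sum_decreasing (m - 2) i (d - i - 1).
set n := m - 2; set e := d - i - 1.
have -> : m + i.+1 - 1 = n + i + 2 by rewrite /n; lia.
have -> : m + d - i.+1 - 1 = n + e + 1 by rewrite /n /e; lia.
have -> : d - i.+1 = e by rewrite /e; lia.
have -> : m + i - 1 = n + i + 1 by rewrite /n; lia.
have -> : m + d - i - 1 = n + e + 2 by rewrite /n /e; lia.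
have -> : d - i = e + 1 by rewrite /e; lia.
by rewrite -addn1; apply; rewrite /n /e; lia.
Qed.

Unset Implicit Arguments.
Local Open Scope ring_scope.

Theorem proposition2p3 (K : fieldType) (charK0 : [pchar K] =i pred0)
  (d : nat) (hd : (2 <= d)%N) :
  (forall m : nat, (2 <= m)%N ->
     forall k : nat, (1 <= k)%N -> (k <= d./2)%N ->
       dimA K m d k = ('C(m + k - 1, k) + 'C(m + d - k - 1, d - k))%N)
  /\
  (exists m0 : nat, forall m : nat, (m0 <= m)%N ->
     forall i : nat, (1 <= i)%N -> (i < d./2)%N ->
       (dimA K m d i.+1 < dimA K m d i)%N).
Proof.
have d_halves := odd_double_half d; rewrite -muln2 in d_halves.
split => [m m_ge2 k k_gt0 k_le|].
  by apply: dimA_perazzo => //; lia.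
exists (d + 3) => m le_dm i i_gt0 i_lt.
rewrite !dimA_perazzo //; try lia.
by apply: perazzo_hilbert_decreasing; lia.
Qed.
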